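(* Let $C$ be a linear completely regular $[n,k,2]_q$ code with covering radius $\rho=1$ and $k<n-1$, and let $n_a$ be the number of codewords at distance one from any vector not in $C$. Let $X_1,\dots,X_{n/n_a}$ be a partition of the coordinate set $\{1,\dots,n\}$ into sets of size $n_a$ such that the support of every weight-2 codeword of $C$ is contained in one of the $X_j$. For each $j$, fix a coordinate $i_j\in X_j$, let $I=\{i_1,\dots,i_{n/n_a}\}$, let $D'$ be the set of codewords of $C$ whose support is contained in $I$, and let $D$ be the code obtained from $D'$ by deleting all coordinates outside $I$. Then $n/n_a\ge 3$ and $D$ is a $q$-ary Hamming code of length $n/n_a$.
   Context: $\mathbb{F}_q$ is the finite field with $q$ elements; the support of a vector is its set of nonzero coordinates; Hamming distance; covering radius $\rho=\max_{\bf v}\min_{{\bf x}\in C}d({\bf v},{\bf x})$. $C$ is completely regular if for every vector ${\bf x}$, with $t=d({\bf x},C)$, the number of codewords at distance $i$ from ${\bf x}$ depends only on $t$ and $i$. For $m\ge 2$ a $q$-ary Hamming code of length $(q^m-1)/(q-1)$ is a linear code with an $m\times (q^m-1)/(q-1)$ parity-check matrix whose columns are nonzero and pairwise linearly independent. *)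

From HB Require Import structures.
From mathcomp Require Import all_boot all_order all_algebra all_field.
Set Implicit Arguments. Unset Strict Implicit. Unset Printing Implicit Defensive.
Import GRing.Theory.
Local Open Scope ring_scope.

Section Codes.
Variable F : finFieldType.

Definition supp n (x : 'rV[F]_n) : {set 'I_n} := [set i | x 0 i != 0].

Definition hdist n (x y : 'rV[F]_n) : nat := #|[set i | x 0 i != y 0 i]|.
Definition wt n (x : 'rV[F]_n) : nat := #|supp x|.

Definition code_set n (C : {vspace 'rV[F]_n}) : {set 'rV[F]_n} :=
  [set x | x \in C].

Definition min_dist n (C : {vspace 'rV[F]_n}) : nat :=
  \big[minn/n.+1]_(c in code_set C | c != 0) wt c.

Definition dist_code n (C : {vspace 'rV[F]_n}) (v : 'rV[F]_n) : nat :=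
  \big[minn/n]_(c in code_set C) hdist v c.

Definition cov_radius n (C : {vspace 'rV[F]_n}) : nat :=
  \max_(v : 'rV[F]_n) dist_code C v.

Definition completely_regular n (C : {vspace 'rV[F]_n}) : Prop :=
  exists f : nat -> nat -> nat, forall (x : 'rV[F]_n) (i : nat),
    #|[set c in code_set C | hdist x c == i]| = f (dist_code C x) i.

Definition hamming_code N (D : {set 'rV[F]_N}) : Prop :=
  exists r : nat, (2 <= r)%N /\ N = ((#|F| ^ r - 1) %/ (#|F| - 1))%N /\
  exists H : 'M[F]_(r, N),
    (forall j, col j H != 0) /\
    (forall j1 j2, j1 != j2 -> \rank (row_mx (col j1 H) (col j2 H)) = 2%N) /\
    D = [set x : 'rV[F]_N | H *m x^T == 0].

End Codes.

From HB Require Import structures.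
From mathcomp Require Import all_boot all_order all_algebra all_field.
From mathcomp Require Import zify.
(* Let G (n x r, r = n - k) be onto with kernel C, so that x *m G is the
   syndrome of x and row i G that of the unit vector e_i.  Minimum distance two
   makes every row of G nonzero, and since weight-two codewords stay inside one
   block, rows taken from different blocks are linearly independent.  For
   i in X_j, the n_a codewords at distance one from a e_i differ from it in
   pairwise distinct coordinates, all lying in X_j, hence in every coordinate of
   X_j; so a row (i) G is a multiple of row (i_j) G.  As the covering radius is
   one, every nonzero syndrome is a multiple of some row, hence of exactly one
   representative row: (q - 1) (n / n_a) = q ^ r - 1.  The representative rows
   are thus the columns of a Hamming parity-check matrix, whose kernel is D. *)

Set Implicit Arguments. Unset Strict Implicit. Unset Printing Implicit Defensive.
Import Order.TTheory GRing.Theory.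
Local Open Scope ring_scope.

Section Vectors.
Variables (F : finFieldType) (n : nat).
Implicit Types (x y c : 'rV[F]_n) (C : {vspace 'rV[F]_n}).

Lemma hdist_eq0 x y : (hdist x y == 0%N) = (x == y).
Proof.
rewrite cards_eq0; apply/eqP/eqP => [xy|->]; last by apply/setP => t; rewrite !inE eqxx.
apply/rowP => t; apply/eqP; apply: contraFT (in_set0 t) => xyt.
by rewrite -xy inE.
Qed.

Definition diff_coord x y : option 'I_n := [pick t | x 0 t != y 0 t].

Lemma diff_coordP x y : hdist x y = 1%N ->
  exists t, [/\ diff_coord x y = Some t, x 0 t != y 0 t
              & x - y = (x 0 t - y 0 t) *: delta_mx 0 t].
Proof.
move/eqP/cards1P=> [t xyt].
have xy_t s : (x 0 s != y 0 s) = (s == t) by rewrite -[RHS]in_set1 -xyt inE.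
exists t; split; rewrite ?xy_t //.
- rewrite /diff_coord; case: pickP => [s|/(_ t)]; rewrite xy_t ?eqxx //.
  by move/eqP->.
- apply/rowP => s; rewrite !mxE eqxx /=.
  have [->|st] := eqVneq s t; first by rewrite mulr1.
  by rewrite mulr0; apply/eqP; rewrite subr_eq0 -[_ == _]negbK xy_t.
Qed.

Lemma supp_delta2 (a b : F) (i1 i2 : 'I_n) :
  supp (a *: delta_mx 0 i1 + b *: delta_mx 0 i2 : 'rV[F]_n) \subset [set i1; i2].
Proof.
apply/subsetP => t; rewrite !inE !mxE.
by case: (t == i1); case: (t == i2); rewrite //= !mulr0 addr0 eqxx.
Qed.

Lemma min_dist_le_wt C c : c \in C -> c != 0 -> (min_dist C <= wt c)%N.
Proof. by move=> cC c0; apply: (bigmin_le_cond n.+1); rewrite inE cC. Qed.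

Lemma dist_code_attained C x : exists2 c, c \in C & hdist x c = dist_code C x.
Proof.
have [||c] := @eq_bigmin _ nat _ n 0 (mem (code_set C)) (hdist x).
- by rewrite !inE mem0v.
- by move=> c _; rewrite -[X in (_ <= X)%O]card_ord; exact: max_card.
by rewrite inE => cC e; exists c.
Qed.

Lemma exists_codeword_hdist1 C x : (cov_radius C <= 1)%N -> x \notin C ->
  exists2 c, c \in C & hdist x c = 1%N.
Proof.
move=> rho1 xNC; have [c cC xc] := dist_code_attained C x.
exists c => //; apply/eqP; rewrite eqn_leq xc (leq_trans (leq_bigmax x)) //=.
by rewrite lt0n -xc hdist_eq0; apply: contraNneq xNC => ->.
Qed.

Lemma code_mxP C x : (x <= \matrix_(i < #|code_set C|) enum_val i)%MS = (x \in C).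
Proof.
apply/idP/idP.
- case/submxP=> w ->; rewrite mulmx_sum_row; apply: memv_suml => i _.
  by apply: memvZ; rewrite rowK; have := enum_valP i; rewrite inE.
- move=> xC; have xS : x \in code_set C by rewrite inE.
  by rewrite -(enum_rankK_in xS xS) -(rowK (fun i => enum_val i)) row_sub.
Qed.

Lemma parity_check_exists C :
  exists r (G : 'M[F]_(n, r)),
    [/\ forall x, (x \in C) = (x *m G == 0),
        forall y : 'rV_r, exists x, x *m G = y & (\dim C + r = n)%N].
Proof.
set K := cokermx (\matrix_(i < #|code_set C|) enum_val i).
exists (\rank K), (col_base K).
have kerG x : (x \in C) = (x *m col_base K == 0).
  rewrite -code_mxP submxE -/K -{1}(mulmx_base K) mulmxA.
  by rewrite mulmx_free_eq0 ?row_base_free.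
have surjG (y : 'rV_(\rank K)) : exists x, x *m col_base K = y.
  have /row_fullP[A AG] := col_base_full K.
  by exists (y *m A); rewrite -mulmxA AG mulmx1.
split=> //.
pose f : 'Hom('rV[F]_n, 'rV[F]_(\rank K)) := linfun (mulmxr (col_base K)).
have kerf : lker f = C by apply/vspaceP => x; rewrite memv_ker lfunE /= kerG.
have imf : (f @: fullv)%VS = fullv.
  apply/vspaceP => y; rewrite memvf; have [x <-] := surjG y.
  by have := memv_img f (memvf x); rewrite lfunE.
by have := limg_ker_dim f fullv; rewrite capfv kerf imf !dimvf !dim_matrix !mul1r.
Qed.

End Vectors.

Section Syndromes.
Variables (F : finFieldType) (n r : nat) (C : {vspace 'rV[F]_n}) (G : 'M[F]_(n, r)).
Hypothesis kerG : forall x, (x \in C) = (x *m G == 0).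
Hypothesis min_dist_gt1 : (1 < min_dist C)%N.

Lemma syndrome_delta2 (a b : F) (i1 i2 : 'I_n) :
  (a *: delta_mx 0 i1 + b *: delta_mx 0 i2) *m G = a *: row i1 G + b *: row i2 G.
Proof. by rewrite mulmxDl -!scalemxAl -!rowE. Qed.

Lemma code_supp1_eq0 c t : c \in C -> supp c \subset [set t] -> c = 0.
Proof.
move=> cC ct; apply/eqP; apply: contraTT min_dist_gt1 => c0.
by rewrite -leqNgt (leq_trans (min_dist_le_wt cC c0)) // -(cards1 t) subset_leq_card.
Qed.

Lemma row_syndrome_neq0 i : row i G != 0.
Proof.
apply/eqP => Gi0.
have ei_C : delta_mx 0 i \in C by rewrite kerG -rowE Gi0.
have ei_supp : supp (delta_mx 0 i : 'rV[F]_n) \subset [set i].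
  by apply/subsetP => t; rewrite !inE mxE eqxx; case: (t == i); rewrite ?eqxx.
have /rowP/(_ i)/eqP := code_supp1_eq0 ei_C ei_supp.
by rewrite !mxE !eqxx oner_eq0.
Qed.

Variables (m : nat) (X : 'I_m -> {set 'I_n}).
Hypothesis X_disj : forall j1 j2, j1 != j2 -> [disjoint X j1 & X j2].
Hypothesis wt2_in_block :
  forall c, c \in C -> wt c = 2%N -> exists j, supp c \subset X j.

Lemma block_uniq t j1 j2 : t \in X j1 -> t \in X j2 -> j1 = j2.
Proof.
move=> t1 t2; apply/eqP; apply: contraTT t2.
by move=> /X_disj/disjointFr->.
Qed.

Lemma code_supp2_eq0 c t1 t2 j1 j2 : c \in C -> supp c \subset [set t1; t2] ->
  t1 \in X j1 -> t2 \in X j2 -> j1 != j2 -> c = 0.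
Proof.
move=> cC ct Xt1 Xt2; apply: contraNeq => c0.
have wtc : wt c = 2%N.
  apply/eqP; rewrite eqn_leq (leq_trans min_dist_gt1 (min_dist_le_wt cC c0)) andbT.
  by rewrite (leq_trans (subset_leq_card ct)) // cards2; case: (t1 != t2).
have [j cj] := wt2_in_block cC wtc.
have suppc : supp c = [set t1; t2].
  by apply/eqP; rewrite eqEcard ct cards2 -/(wt c) wtc; case: (t1 != t2).
rewrite suppc in cj; rewrite (block_uniq Xt1 (subsetP cj _ (set21 _ _))).
by rewrite (block_uniq Xt2 (subsetP cj _ (set22 _ _))).
Qed.

Lemma syndrome_pair_free t1 t2 j1 j2 (a b : F) :
  t1 \in X j1 -> t2 \in X j2 -> j1 != j2 ->
  a *: row t1 G + b *: row t2 G = 0 -> a = 0 /\ b = 0.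
Proof.
move=> Xt1 Xt2 j12 ab0.
have t12 : t1 != t2.
  apply: contraNneq j12 => t12; apply/eqP; rewrite t12 in Xt1.
  exact: block_uniq Xt1 Xt2.
have /code_supp2_eq0 c0 : a *: delta_mx 0 t1 + b *: delta_mx 0 t2 \in C.
  by rewrite kerG syndrome_delta2 ab0.
have {c0}/rowP c0 := c0 _ _ _ _ (supp_delta2 a b t1 t2) Xt1 Xt2 j12.
have := c0 t1; have := c0 t2; rewrite !mxE !eqxx eq_sym (negbTE t12).
by rewrite !mulr0 !mulr1 add0r addr0.
Qed.

Hypothesis X_cover : forall t : 'I_n, exists j, t \in X j.
Variable n_a : nat.
Hypothesis X_card : forall j, #|X j| = n_a.
Hypothesis card_hdist1 : forall v : 'rV[F]_n, v \notin C ->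
  #|[set c in code_set C | hdist v c == 1%N]| = n_a.
Variable rep : 'I_m -> 'I_n.
Hypothesis rep_in_block : forall j, rep j \in X j.

Lemma syndrome_block_rep (a : F) i j : a != 0 -> i \in X j ->
  exists2 b, b != 0 & a *: row i G = b *: row (rep j) G.
Proof.
move=> a0 Xi.
pose v : 'rV[F]_n := a *: delta_mx 0 i.
have vE t : v 0 t = a * (t == i)%:R by rewrite !mxE eqxx.
have vNC : v \notin C.
  by rewrite kerG -scalemxAl -rowE scaler_eq0 negb_or a0 row_syndrome_neq0.
pose S := [set c in code_set C | hdist v c == 1%N].
have memS c : c \in S -> c \in C /\ exists t, [/\ diff_coord v c = Some t,
    v 0 t != c 0 t & v - c = (v 0 t - c 0 t) *: delta_mx 0 t].
  by rewrite !inE => /andP[cC /eqP/diff_coordP].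
have diff_in_block c : c \in S -> diff_coord v c \in Some @: X j.
  case/memS=> cC [t [-> vct evc]]; apply: imset_f.
  have [j' Xt] := X_cover t; have [-> //|jj'] := eqVneq j j'.
  have cE : c = a *: delta_mx 0 i + (- (v 0 t - c 0 t)) *: delta_mx 0 t.
    by rewrite scaleNr -evc opprB addrC subrK.
  have := supp_delta2 a (- (v 0 t - c 0 t)) i t; rewrite -cE => c_supp.
  have c0 := code_supp2_eq0 cC c_supp Xi Xt jj'.
  move: vct; rewrite c0 vE mxE; have [ti _|] := eqVneq t i; last by rewrite mulr0 eqxx.
  by rewrite ti in Xt; rewrite (block_uniq Xi Xt) eqxx in jj'.
have diff_inj : {in S &, injective (diff_coord v)}.
  move=> c1 c2 /memS[c1C [t1 [-> _ e1]]] /memS[c2C [t2 [-> _ e2]]] [t12].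
  rewrite -t12 in e2; apply/eqP; rewrite -subr_eq0; apply/eqP.
  apply: (code_supp1_eq0 (t := t1)); first by rewrite rpredB.
  have -> : c1 - c2 = (v - c2) - (v - c1).
    by rewrite opprB [RHS]addrC addrA subrK.
  rewrite e1 e2 -scalerBl; apply/subsetP => s; rewrite !inE !mxE eqxx.
  by case: (s == t1); rewrite ?mulr0 ?eqxx.
have : Some (rep j) \in diff_coord v @: S.
  have sub : diff_coord v @: S \subset Some @: X j.
    by apply/subsetP => _ /imsetP[d dS ->]; exact: diff_in_block.
  suff -> : diff_coord v @: S = Some @: X j by apply: imset_f.
  apply/eqP; rewrite eqEcard sub /= !card_in_imset //; last by move=> ? ? _ _ [].
  by rewrite X_card card_hdist1.
case/imsetP=> c /memS[cC [t [-> vct evc]]] [->].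
exists (v 0 t - c 0 t); first by rewrite subr_eq0.
move: cC; rewrite kerG => /eqP cG.
by rewrite !rowE scalemxAl -/v -{1}(subrK c v) mulmxDl cG addr0 evc -scalemxAl.
Qed.

Hypothesis syndrome_surj : forall y : 'rV[F]_r, exists x, x *m G = y.
Hypothesis cov_radius_le1 : (cov_radius C <= 1)%N.

Lemma nonzero_syndrome_rep y : y != 0 ->
  exists b j, b != 0 /\ y = b *: row (rep j) G.
Proof.
move=> y0; have [x xG] := syndrome_surj y.
have xNC : x \notin C by rewrite kerG xG.
have [c cC /diff_coordP[t [_ xct exc]]] := exists_codeword_hdist1 cov_radius_le1 xNC.
have [j Xt] := X_cover t.
have [|b b0 e] := @syndrome_block_rep (x 0 t - c 0 t) t j _ Xt.
  by rewrite subr_eq0.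
exists b, j; split => //; rewrite -xG -e; move: cC; rewrite kerG => /eqP cG.
by rewrite -{1}(subrK c x) mulmxDl cG addr0 exc -scalemxAl -rowE.
Qed.

Lemma card_nonzero_syndromes : ((#|F| - 1) * m = #|F| ^ r - 1)%N.
Proof.
pose S := setX [set~ (0 : F)] [set: 'I_m].
pose phi (p : F * 'I_m) := p.1 *: row (rep p.2) G.
have phi_inj : {in S &, injective phi}.
  move=> [a j1] [b j2]; rewrite !inE /= !andbT => a0 b0; rewrite /phi /= => e.
  have [j12|j12] := eqVneq j1 j2.
    rewrite -j12 in e *.
    have : (a - b) *: row (rep j1) G == 0 by rewrite scalerBl e subrr.
    by rewrite scaler_eq0 (negbTE (row_syndrome_neq0 _)) orbF subr_eq0 => /eqP->.
  have : a *: row (rep j1) G + (- b) *: row (rep j2) G = 0 by rewrite e scaleNr subrr.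
  case/(syndrome_pair_free (rep_in_block j1) (rep_in_block j2) j12) => a_eq0 _.
  by rewrite a_eq0 eqxx in a0.
have phi_im : phi @: S = [set~ 0].
  apply/setP => y; rewrite !inE; apply/imsetP/idP.
  - case=> [[a j]]; rewrite !inE andbT /= => a0 ->.
    by rewrite scaler_eq0 negb_or a0 row_syndrome_neq0.
  - by case/nonzero_syndrome_rep => b [j [b0 ->]]; exists (b, j); rewrite ?inE ?b0.
have := card_in_imset phi_inj; rewrite phi_im cardsX !cardsC1 cardsT card_ord.
by rewrite card_mx mul1n !subn1 => <-.
Qed.

End Syndromes.

Lemma three_le_hamming_length q r m : (1 < q)%N -> (1 < r)%N ->
  ((q - 1) * m = q ^ r - 1)%N -> (3 <= m)%N.
Proof.
move=> q_gt1 r_gt1; have : (q ^ 2 <= q ^ r)%N by rewrite leq_pexp2l // ltnW.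
rewrite expnS expn1; move: (q ^ r)%N => Q; nia.
Qed.

Lemma rank_col_mx2 (F : fieldType) r (u v : 'rV[F]_r) :
  (forall a b, a *: u + b *: v = 0 -> a = 0 /\ b = 0) -> \rank (col_mx u v) = 2%N.
Proof.
move=> uv_free; apply/eqP; apply: inj_row_free => w wuv0.
have wE : w = row_mx (lsubmx w 0 0)%:M (rsubmx w 0 0)%:M.
  by rewrite -[LHS]hsubmxK -!mx11_scalar.
move: wuv0; rewrite wE mul_row_col !mul_scalar_mx => /uv_free[-> ->].
by rewrite !raddf0 row_mx0.
Qed.

Section Shortening.
Variables (F : finFieldType) (m n : nat) (f : 'I_m -> 'I_n).
Hypothesis f_inj : injective f.

Definition embed_mx : 'M[F]_(m, n) := \matrix_(j, t) (f j == t)%:R.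

Lemma row_embed_mx j : row j embed_mx = delta_mx 0 (f j).
Proof. by apply/rowP => t; rewrite !mxE eqxx eq_sym. Qed.

Lemma embed_mxE (x : 'rV[F]_m) j : (x *m embed_mx) 0 (f j) = x 0 j.
Proof.
rewrite mxE (bigD1 j) //= mxE eqxx mulr1 big1 ?addr0 // => j' j'j.
by rewrite mxE (inj_eq f_inj) (negbTE j'j) mulr0.
Qed.

Lemma embed_mx_out (x : 'rV[F]_m) t : t \notin [set f j | j : 'I_m] ->
  (x *m embed_mx) 0 t = 0.
Proof.
move=> tNf; rewrite mxE big1 // => j _; rewrite mxE.
have /negbTE-> : f j != t by apply: contraNneq tNf => <-; exact: imset_f.
by rewrite mulr0.
Qed.

Variables (r : nat) (C : {vspace 'rV[F]_n}) (G : 'M[F]_(n, r)).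
Hypothesis kerG : forall x, (x \in C) = (x *m G == 0).

Lemma col_embed_syndrome j : col j (embed_mx *m G)^T = (row (f j) G)^T.
Proof. by rewrite -tr_row row_mul row_embed_mx -rowE. Qed.

Lemma shortened_codeE :
  [set \row_(j < m) c 0 (f j) | c : 'rV[F]_n in
     [set c in code_set C | supp c \subset [set f j | j : 'I_m]]]
  = [set x : 'rV_m | (embed_mx *m G)^T *m x^T == 0].
Proof.
apply/setP => x; rewrite inE -trmx_mul trmx_eq0 mulmxA -kerG.
apply/imsetP/idP => [[c]|xEC].
- rewrite !inE => /andP[cC c_supp] ->.
  suff -> : (\row_j c 0 (f j)) *m embed_mx = c by [].
  apply/rowP => t; case: (boolP (t \in [set f j | j : 'I_m])) => [/imsetP[j _ ->]|tNf].
    by rewrite embed_mxE mxE.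
  rewrite embed_mx_out //; apply/esym/eqP; apply: contraNT tNf => ct.
  by apply: (subsetP c_supp); rewrite inE.
- exists (x *m embed_mx); last by apply/rowP => j; rewrite mxE embed_mxE.
  rewrite !inE xEC; apply/subsetP => t; rewrite inE; apply: contraR => tNf.
  by rewrite embed_mx_out.
Qed.

End Shortening.

Arguments embed_mx {F m n} f.

Theorem proposition3p9 (F : finFieldType) (n k : nat) (C : {vspace 'rV[F]_n})
  (hk : \dim C = k) (hd : min_dist C = 2%N)
  (hcr : completely_regular C) (hrho : cov_radius C = 1%N)
  (hkn : (k < n - 1)%N)
  (n_a : nat)
  (hna : forall v : 'rV[F]_n, v \notin C ->
           #|[set c in code_set C | hdist v c == 1%N]| = n_a)
  (m : nat) (hm : m = (n %/ n_a)%N)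
  (X : 'I_m -> {set 'I_n})
  (hXsize : forall j, #|X j| = n_a)
  (hXdisj : forall j1 j2, j1 != j2 -> [disjoint X j1 & X j2])
  (hXcover : forall i : 'I_n, exists j, i \in X j)
  (hw2 : forall c, c \in C -> wt c = 2%N -> exists j, supp c \subset X j)
  (ii : 'I_m -> 'I_n) (hii : forall j, ii j \in X j) :
  let I := [set ii j | j : 'I_m] in
  let D' := [set c in code_set C | supp c \subset I] in
  let D := [set (\row_(j < m) c 0 (ii j)) | c : 'rV[F]_n in D'] in
  (3 <= m)%N /\ hamming_code D.
Proof.
move=> I D' D.
have [r [G [kerG surjG dimCr]]] := parity_check_exists C.
have r_gt1 : (1 < r)%N by lia.
have dist_gt1 : (1 < min_dist C)%N by rewrite hd.
have rho_le1 : (cov_radius C <= 1)%N by rewrite hrho.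
have ii_inj : injective ii.
  by move=> j1 j2 e; apply: (block_uniq hXdisj (hii j1)); rewrite e hii.
have qm := card_nonzero_syndromes kerG dist_gt1 hXdisj hw2 hXcover hXsize hna hii
  surjG rho_le1.
have q_gt1 := finNzRing_gt1 F.
split; first exact: three_le_hamming_length q_gt1 r_gt1 qm.
exists r; split=> //; split; first by rewrite -qm mulKn // subn_gt0.
exists (embed_mx ii *m G)^T; split; last split.
- by move=> j; rewrite col_embed_syndrome trmx_eq0 (row_syndrome_neq0 kerG dist_gt1).
- move=> j1 j2 j12; rewrite !col_embed_syndrome -tr_col_mx mxrank_tr.
  apply: rank_col_mx2 => a b.
  exact: (syndrome_pair_free kerG dist_gt1 hXdisj hw2 (hii j1) (hii j2) j12).
- exact: (shortened_codeE ii_inj kerG).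
Qed.
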